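(* There is an absolute constant $c > 0$ such that for every integer $L \geq 2$, every $m$, and every $\lambda \in [m]^{L+1}$ with pairwise distinct entries, the following holds: if $\lambda = \tau^0, \tau^1, \ldots, \tau^N$ is any sequence of states such that for each $s \in [N]$, $\tau^s = (j_s - 1, j_s)\tau^{s-1}$ for some $j_s \in \{1,\ldots,L\}$, and $\tau^N_L = \lambda_0$, then there exists $s \in \{0,\ldots,N\}$ such that $|\{\ell \in \{0,\ldots,L\} : \tau^s_\ell \neq \lambda_\ell\}| \geq c\log L$.
   Context: States are vectors $\tau = (\tau_0, \ldots, \tau_L) \in [m]^{L+1}$ (coordinate $\ell$ is level $\ell$); $(a,b)\tau$ denotes $\tau$ with the entries at levels $a$ and $b$ exchanged. Thus the sequence transforms $\lambda$ into a state whose level-$L$ entry is the original level-0 entry, using only swaps of adjacent levels. *)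

From mathcomp Require Import all_boot.
From mathcomp Require Import fingroup perm.
From Stdlib Require Import Reals.

Set Implicit Arguments.
Unset Strict Implicit.
Unset Printing Implicit Defensive.

(* A state is tau : {ffun 'I_(L+1) -> 'I_m}; level l entry is tau l.
   (a,b)tau : the state with the entries at levels a and b exchanged. *)
Definition swap_lv (n m : nat) (a b : 'I_n) (t : {ffun 'I_n -> 'I_m})
  : {ffun 'I_n -> 'I_m} := [ffun l => t (tperm a b l)].

From mathcomp Require Import all_boot fingroup perm zify.
From Stdlib Require Import Reals Lra Psatz.
(* Reals rebinds [^] on nat to [Nat.pow]; restore [expn]. *)
Import ssrnat.

Set Implicit Arguments.
Unset Strict Implicit.
Unset Printing Implicit Defensive.

(* Call the window of levels (a, b] clean at time s when tau s agrees there
   with lam. If an entry x crosses a clean window of 2^k levels from below,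
   then at some moment of the crossing at least k + 1 levels of the window are
   displaced; reflecting the levels gives the same for crossings from above.
   Induction on k: cut the window at c into two halves, let t be the last time
   before x reaches b at which the upper half is clean, and apply induction to
   the upper half after t; it stays dirty from then on. If the lower half is
   clean at the moment obtained, then either x is still below it and has to
   cross it again, or x has left the levels <= c and some value y has entered
   them: y either crosses the lower half downwards (a crossing from below in
   reversed time), or y is the lam-value of a level in the lower half coming
   from above b, whose crossing of the upper half from above leaves that level
   displaced. For the window (0, L] and k = floor (log2 L) this gives at least
   ln L displaced levels. *)

Lemma injective_exchange (I T : finType) (t t' : {ffun I -> T}) (S : {set I}) x :
  injective t -> injective t' -> {subset codom t' <= codom t} ->
  x \in t @: S -> x \notin t' @: S ->
  exists p1 p2, [/\ p1 \in S, p2 \notin S & t' p1 = t p2].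
Proof.
move=> t_inj t'_inj sub xS xS'.
have /subsetPn [y yS' yS] : ~~ (t' @: S \subset t @: S).
  apply: contra xS' => subS.
  suff -> : t' @: S = t @: S by [].
  by apply/eqP; rewrite eqEcard subS (card_imset _ t_inj) (card_imset _ t'_inj) leqnn.
case/imsetP: yS' yS => p1 p1S -> p1S'.
have /codomP [p2 e] := sub _ (codom_f t' p1).
exists p1, p2; split => //.
by apply: contra p1S' => p2S; rewrite e imset_f.
Qed.

Section Walks.
Variables (n : nat) (T : finType).
Implicit Types (t lam : {ffun 'I_n -> T}) (tau : nat -> {ffun 'I_n -> T}).

(* Stuttering steps let a finite sequence of swaps continue forever. *)
Definition adj_step t t' : Prop :=
  t' = t \/ exists i j : 'I_n, j = i.+1 :> nat /\ t' = [ffun l => t (tperm i j l)].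

Definition walk tau := forall s, adj_step (tau s) (tau s.+1).

Definition mirror t := [ffun l => t (rev_ord l)].

Lemma adj_step_perm t t' :
  adj_step t t' -> exists p : {perm 'I_n}, t' = [ffun l => t (p l)].
Proof.
case=> [->|[i [j [_ ->]]]]; last by exists (tperm i j).
by exists 1%g; apply/ffunP => l; rewrite ffunE perm1.
Qed.

Lemma adj_step_sym t t' : adj_step t t' -> adj_step t' t.
Proof.
case=> [->|[i [j [ij ->]]]]; first by left.
by right; exists i, j; split => //; apply/ffunP => l; rewrite !ffunE tpermK.
Qed.

Lemma adj_step_move t t' (l : 'I_n) : adj_step t t' ->
  exists l' : 'I_n, [/\ t' l' = t l, l' <= l.+1 & l <= l'.+1].
Proof.
case=> [->|[i [j [ij ->]]]]; first by exists l; split => //; lia.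
exists (tperm i j l); rewrite ffunE tpermK; split => //; case: tpermP => [->|->|]; lia.
Qed.

Lemma adj_step_mirror t t' : adj_step t t' -> adj_step (mirror t) (mirror t').
Proof.
case=> [->|[i [j [ij ->]]]]; first by left.
right; exists (rev_ord j), (rev_ord i); split; first by have := ltn_ord j; rewrite /=; lia.
apply/ffunP => l; rewrite !ffunE; congr (t _).
case: (tpermP (rev_ord j) (rev_ord i) l) => [->|->|lj li]; rewrite ?rev_ordK ?tpermL ?tpermR //.
by rewrite tpermD //; apply/eqP => e; [apply: li | apply: lj]; rewrite e rev_ordK.
Qed.

Lemma walk_perm tau s :
  walk tau -> exists p : {perm 'I_n}, tau s = [ffun l => tau 0 (p l)].
Proof.
move=> w; elim: s => [|s [p def_s]].
  by exists 1%g; apply/ffunP => l; rewrite ffunE perm1.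
have [q ->] := adj_step_perm (w s).
by exists (q * p)%g; apply/ffunP => l; rewrite !ffunE def_s ffunE permM.
Qed.

Lemma walk_inj tau : walk tau -> injective (tau 0) -> forall s, injective (tau s).
Proof.
move=> w inj0 s l l'; have [p ->] := walk_perm s w.
by rewrite !ffunE => /inj0 /perm_inj.
Qed.

Lemma walk_mem tau s s' (l : 'I_n) : walk tau -> exists l', tau s' l' = tau s l.
Proof.
move=> w; have [p ->] := walk_perm s w; have [q ->] := walk_perm s' w.
by exists (q^-1 (p l))%g; rewrite !ffunE permKV.
Qed.

Lemma walk_rev tau s1 : walk tau -> walk (fun s => tau (s1 - s)).
Proof.
move=> w s; case: (ltnP s s1) => s_s1.
  have -> : s1 - s = (s1 - s.+1).+1 by lia.
  exact/adj_step_sym/w.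
have [-> ->] : s1 - s = 0 /\ s1 - s.+1 = 0 by lia.
by left.
Qed.

Lemma walk_mirror tau : walk tau -> walk (fun s => mirror (tau s)).
Proof. by move=> w s; apply/adj_step_mirror/w. Qed.

Section InjectiveWalk.
Variable tau : nat -> {ffun 'I_n -> T}.
Hypotheses (tau_walk : walk tau) (tau_inj : forall s, injective (tau s)).

Lemma walk_ivt x s0 s1 (l0 l1 : 'I_n) u : s0 <= s1 ->
  tau s0 l0 = x -> l0 <= u -> tau s1 l1 = x -> u <= l1 ->
  exists s (l : 'I_n), [/\ s0 <= s <= s1, tau s l = x & l = u :> nat].
Proof.
move=> s01; move: {2}(s1 - s0) (erefl (s1 - s0)) => d.
elim: d s0 l0 s01 => [|d IH] s0 l0 s01 s10_d x0 l0u x1 ul1.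
  have s10 : s1 = s0 by lia.
  rewrite s10 in x1 *.
  have l01 : l1 = l0 by apply: (@tau_inj s0); rewrite x0 x1.
  by rewrite l01 in ul1; exists s0, l0; split => //; lia.
case: (eqVneq (nat_of_ord l0) u) => [l0u'|l0u'].
  by exists s0, l0; split => //; lia.
have [l' [xl' l'l0 l0l']] := adj_step_move l0 (tau_walk s0).
have [s [l [ss1 xl lu]]] :=
  IH s0.+1 l' ltac:(lia) ltac:(lia) (etrans xl' x0) ltac:(lia) x1 ul1.
by exists s, l; split => //; lia.
Qed.

Lemma walk_first_arrival x s0 s1 (l0 l1 : 'I_n) u : s0 <= s1 ->
  tau s0 l0 = x -> l0 <= u -> tau s1 l1 = x -> u <= l1 ->
  exists s, [/\ s0 <= s <= s1, exists2 l : 'I_n, tau s l = x & u <= l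
    & forall s' (l : 'I_n), s0 <= s' <= s -> tau s' l = x -> l <= u].
Proof.
move=> s01 x0 l0u x1 ul1.
pose at_u s := [exists l : 'I_n, [&& s0 <= s, l == u :> nat & tau s l == x]].
have [s [l [/andP [s0s ss1] xl lu]]] := walk_ivt s01 x0 l0u x1 ul1.
have at_u_s : at_u s by apply/existsP; exists l; rewrite s0s xl lu !eqxx.
have [sm /existsP [lm /and3P [s0sm /eqP lmu /eqP xlm]] min_sm] := ex_minnP (ex_intro _ s at_u_s).
have sms := min_sm s at_u_s.
exists sm; split; [lia | by exists lm; rewrite ?lmu |].
move=> s' l' /andP [s0s' s'sm] xl'; case: (leqP l' u) => // ul'.
have [s'' [l'' [/andP [s0s'' s''s'] xl'' l''u]]] := walk_ivt s0s' x0 l0u xl' (ltnW ul').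
have sm_s'' : sm <= s'' by apply: min_sm; apply/existsP; exists l''; rewrite s0s'' xl'' l''u !eqxx.
have s'_sm : s' = sm by lia.
have l'_lm : l' = lm by apply: (@tau_inj sm); rewrite -s'_sm xl' s'_sm xlm.
by rewrite l'_lm lmu ltnn in ul'.
Qed.

End InjectiveWalk.

Definition mismatches lam t a b := #|[set l : 'I_n | a < l <= b & t l != lam l]|.

Lemma mismatches0P lam t a b :
  mismatches lam t a b = 0 -> forall l : 'I_n, a < l <= b -> t l = lam l.
Proof.
move=> /eqP; rewrite cards_eq0 => /eqP empty l lab; apply/eqP; apply: contraT => ne.
have : l \in [set l : 'I_n | a < l <= b & t l != lam l] by rewrite inE lab.
by rewrite empty inE.
Qed.

Lemma mismatches_gt0 lam t a b (l : 'I_n) :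
  a < l <= b -> t l <> lam l -> 0 < mismatches lam t a b.
Proof. by move=> lab ne; apply/card_gt0P; exists l; rewrite inE lab; apply/eqP. Qed.

Lemma mismatches_split lam t a c b : a <= c <= b ->
  mismatches lam t a c + mismatches lam t c b = mismatches lam t a b.
Proof.
move=> acb; rewrite /mismatches -cardsUI.
set lo := [set l : 'I_n | _]; set hi := [set l : 'I_n | _].
have -> : lo :&: hi = set0.
  by apply/setP => l; rewrite !inE; case: (t l != lam l); rewrite ?andbF ?andbT //; lia.
rewrite cards0 addn0; apply: eq_card => l; rewrite !inE.
by case: (t l != lam l); rewrite ?andbF ?andbT //; lia.
Qed.

Lemma mismatches_mirror lam t a b : b.+2 <= n ->
  mismatches (mirror lam) (mirror t) (n - b.+2) (n - a.+2) = mismatches lam t a b.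
Proof.
move=> bn; rewrite /mismatches -[RHS](card_preimset _ (@rev_ord_inj n)).
apply: eq_card => l; rewrite !inE !ffunE; congr (_ && _).
by have := ltn_ord l; rewrite /=; lia.
Qed.

Lemma mismatches_le lam t a b : mismatches lam t a b <= #|[set l | t l != lam l]|.
Proof. by apply/subset_leq_card/subsetP => l; rewrite !inE => /andP []. Qed.

Lemma clean_lam_inj lam t a b (p l : 'I_n) : injective t -> mismatches lam t a b = 0 ->
  a < l <= b -> t p = lam l -> p = l.
Proof. by move=> t_inj clean lab tp; apply: t_inj; rewrite tp (mismatches0P clean lab). Qed.

Lemma clean_neq_lam lam t a b (p l : 'I_n) :
  injective t -> mismatches lam t a b = 0 -> p <= a -> a < l <= b -> t p <> lam l.
Proof.
move=> t_inj clean pa lab /(clean_lam_inj t_inj clean lab) pl.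
by rewrite pl in pa; lia.
Qed.

Lemma mismatchesxx lam a b : mismatches lam lam a b = 0.
Proof. by apply/eqP; rewrite cards_eq0; apply/eqP/setP => l; rewrite !inE eqxx andbF. Qed.

End Walks.

Definition right_crossing k := forall n (T : finType) (lam : {ffun 'I_n -> T})
    (tau : nat -> {ffun 'I_n -> T}), walk tau -> (forall s, injective (tau s)) ->
  forall a b s0 s1 x, a + 2 ^ k <= b -> s0 <= s1 -> mismatches lam (tau s0) a b = 0 ->
  (exists2 l : 'I_n, tau s0 l = x & l <= a) -> (exists2 l : 'I_n, tau s1 l = x & b <= l) ->
  exists s, [/\ s0 <= s <= s1, k < mismatches lam (tau s) a b
              & forall l : 'I_n, tau s l = x -> l <= b].

(* The image of [right_crossing k] under the reflection of levels [l |-> n - 1 - l]. *)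
Definition left_crossing k := forall n (T : finType) (lam : {ffun 'I_n -> T})
    (tau : nat -> {ffun 'I_n -> T}), walk tau -> (forall s, injective (tau s)) ->
  forall a b s0 s1 x, a + 2 ^ k <= b -> s0 <= s1 -> mismatches lam (tau s0) a b = 0 ->
  (exists2 l : 'I_n, tau s0 l = x & b < l) -> (exists2 l : 'I_n, tau s1 l = x & l <= a.+1) ->
  exists s, [/\ s0 <= s <= s1, k < mismatches lam (tau s) a b
              & forall l : 'I_n, tau s l = x -> a < l].

Lemma right_crossing0 : right_crossing 0.
Proof.
move=> n T lam tau tau_walk tau_inj a b s0 s1 x ab s01 clean [l0 x0 l0a] [l1 x1 bl1].
rewrite expn0 in ab.
have [s [s_range [lb xb blb] x_le_b]] :=
  walk_first_arrival (u := b) tau_walk tau_inj s01 x0 ltac:(lia) x1 bl1.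
have lbb : lb <= b := x_le_b s lb ltac:(lia) xb.
exists s; split => [|| l xl]; [lia | | exact: x_le_b s l ltac:(lia) xl].
apply: (mismatches_gt0 (l := lb)); first lia.
by rewrite xb -x0; apply: clean_neq_lam (tau_inj s0) clean l0a _; lia.
Qed.

Lemma left_crossing_of_right k : right_crossing k -> left_crossing k.
Proof.
move=> right_k n T lam tau tau_walk tau_inj a b s0 s1 x ab s01 clean [l0 x0 bl0] [l1 x1 l1a].
have bn : b.+2 <= n by have := ltn_ord l0; lia.
have mirror_inj s : injective (mirror (tau s)).
  by move=> l l'; rewrite !ffunE => /tau_inj /rev_ord_inj.
have start : exists2 l : 'I_n, mirror (tau s0) l = x & l <= n - b.+2.
  by exists (rev_ord l0); rewrite ?ffunE ?rev_ordK //=; lia.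
have finish : exists2 l : 'I_n, mirror (tau s1) l = x & n - a.+2 <= l.
  by exists (rev_ord l1); rewrite ?ffunE ?rev_ordK //=; lia.
have mirror_clean : mismatches (mirror lam) (mirror (tau s0)) (n - b.+2) (n - a.+2) = 0.
  by rewrite mismatches_mirror.
have [s [s_range many x_le]] := right_k n T (mirror lam) _ (walk_mirror tau_walk) mirror_inj
  (n - b.+2) (n - a.+2) s0 s1 x ltac:(lia) s01 mirror_clean start finish.
exists s; split => //; first by rewrite -mismatches_mirror.
move=> l xl; have := x_le (rev_ord l); rewrite ffunE rev_ordK => /(_ xl) /=.
by have := ltn_ord l; lia.
Qed.

Section CrossingStep.
Variable k : nat.
Hypotheses (right_k : right_crossing k) (left_k : left_crossing k).
Variables (n : nat) (T : finType) (lam : {ffun 'I_n -> T}) (tau : nat -> {ffun 'I_n -> T}).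
Hypotheses (tau_walk : walk tau) (tau_inj : forall s, injective (tau s)).
Variables (a c b s0 s1 : nat) (x : T).
Hypotheses (ac : a + 2 ^ k <= c) (cb : c + 2 ^ k <= b) (s01 : s0 <= s1).
Hypothesis clean0 : mismatches lam (tau s0) a b = 0.
Hypothesis x_start : exists2 l : 'I_n, tau s0 l = x & l <= a.
Hypothesis x_end : exists2 l : 'I_n, tau s1 l = x & b <= l.
Hypothesis x_le_b : forall s (l : 'I_n), s0 <= s <= s1 -> tau s l = x -> l <= b.

Lemma x_neq_lam (l : 'I_n) : a < l <= b -> x <> lam l.
Proof.
by move=> lab; case: x_start => l0 <- l0a; apply: clean_neq_lam (@tau_inj s0) clean0 l0a lab.
Qed.

Lemma last_clean_time : exists t, [/\ s0 <= t < s1, mismatches lam (tau t) c b = 0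
  & forall s, t < s <= s1 -> 0 < mismatches lam (tau s) c b].
Proof.
pose clean s := (s0 <= s <= s1) && (mismatches lam (tau s) c b == 0).
have clean_s0 : clean s0.
  have := mismatches_split lam (tau s0) (a := a) (c := c) (b := b) ltac:(lia).
  by rewrite clean0 /clean leqnn s01 => /eqP; rewrite addn_eq0 => /andP [].
have clean_le_s1 s : clean s -> s <= s1 by case/andP => /andP [].
case: (ex_maxnP (ex_intro _ s0 clean_s0) clean_le_s1) => t /andP [t_range /eqP clean_t] max_t.
have dirty_s1 : 0 < mismatches lam (tau s1) c b.
  have [lb xlb blb] := x_end; have lbb := @x_le_b s1 lb ltac:(lia) xlb.
  by apply: (mismatches_gt0 (l := lb)); [lia | rewrite xlb; apply: x_neq_lam; lia].
have t_s1 : t != s1 by apply: contraTneq dirty_s1 => <-; rewrite clean_t.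
exists t; split => // [|s s_range]; first lia.
rewrite lt0n; apply/negP => /eqP clean_s.
by have := max_t s; rewrite /clean clean_s eqxx andbT => /(_ ltac:(lia)); lia.
Qed.

Section FromLastCleanTime.
Variable t : nat.
Hypotheses (s0t : s0 <= t) (ts1 : t < s1).
Hypothesis clean_t : mismatches lam (tau t) c b = 0.
Hypothesis dirty_after_t : forall s, t < s <= s1 -> 0 < mismatches lam (tau s) c b.

Lemma x_le_c_at_t : exists2 l : 'I_n, tau t l = x & l <= c.
Proof.
case: x_start => l0 x0 _; have [l xl] := walk_mem s0 t l0 tau_walk.
exists l; first by rewrite xl.
rewrite leqNgt; apply/negP => cl.
have lb := @x_le_b t l ltac:(lia) (etrans xl x0).
by apply: (@x_neq_lam l); [lia | rewrite -x0 -xl (mismatches0P clean_t) //; lia].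
Qed.

Lemma crossing_after_t s : t < s <= s1 -> k < mismatches lam (tau s) a c ->
  exists2 s, s0 <= s <= s1 & k.+1 < mismatches lam (tau s) a c + mismatches lam (tau s) c b.
Proof. by move=> s_range many; exists s; [lia | have := dirty_after_t s_range; lia]. Qed.

Lemma crossing_x_low ss : t < ss <= s1 -> mismatches lam (tau ss) a c = 0 ->
  (exists2 l : 'I_n, tau ss l = x & l <= a) ->
  exists2 s, s0 <= s <= s1 & k.+1 < mismatches lam (tau s) a c + mismatches lam (tau s) c b.
Proof.
move=> ss_range clean_ss x_ss.
have x_s1 : exists2 l : 'I_n, tau s1 l = x & c <= l.
  by case: x_end => l xl bl; exists l => //; lia.
have [s [s_range many _]] :=
  right_k tau_walk tau_inj ac (andP ss_range).2 clean_ss x_ss x_s1.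
by apply: (crossing_after_t (s := s)); first lia.
Qed.

Lemma crossing_entrant_low ss (p1 p2 : 'I_n) : t < ss <= s1 ->
  mismatches lam (tau ss) a c = 0 -> p1 <= a -> c < p2 -> tau ss p1 = tau t p2 ->
  exists2 s, s0 <= s <= s1 & k.+1 < mismatches lam (tau s) a c + mismatches lam (tau s) c b.
Proof.
move=> ss_range clean_ss p1a cp2 e.
(* In reversed time, from ss back to t, y crosses (a, c] from below. *)
have rev_clean : mismatches lam (tau (ss - 0)) a c = 0 by rewrite subn0.
have y_start : exists2 l : 'I_n, tau (ss - 0) l = tau ss p1 & l <= a.
  by exists p1; rewrite ?subn0.
have y_end : exists2 l : 'I_n, tau (ss - (ss - t)) l = tau ss p1 & c <= l.
  by exists p2; [rewrite subKn ?e //; lia | lia].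
have [i [i_range many y_le_c]] := right_k (walk_rev ss tau_walk) (fun i => @tau_inj (ss - i))
  ac (leq0n (ss - t)) rev_clean y_start y_end.
have t_lt : t < ss - i.
  rewrite ltn_neqAle; apply/andP; split; last lia.
  by apply/eqP => ti; have := y_le_c p2; rewrite -ti e => /(_ erefl); lia.
by apply: (crossing_after_t (s := ss - i)); first lia.
Qed.

Lemma crossing_entrant_mid ss (p1 p2 : 'I_n) : t < ss <= s1 ->
  mismatches lam (tau ss) a c = 0 -> a < p1 <= c -> c < p2 -> tau ss p1 = tau t p2 ->
  exists2 s, s0 <= s <= s1 & k.+1 < mismatches lam (tau s) a c + mismatches lam (tau s) c b.
Proof.
move=> ss_range clean_ss ap1c cp2 e.
have y_lam : tau ss p1 = lam p1 := mismatches0P clean_ss ap1c.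
have bp2 : b < p2.
  rewrite ltnNge; apply/negP => p2b.
  have ap1b : a < p1 <= b by lia.
  have ap2b : a < p2 <= b by lia.
  have cp2b : c < p2 <= b by lia.
  suff p12 : p1 = p2 by rewrite p12 in ap1c; lia.
  apply: (clean_lam_inj (@tau_inj s0) clean0 ap2b).
  by rewrite (mismatches0P clean0 ap1b) -y_lam e (mismatches0P clean_t cp2b).
have y_start : exists2 l : 'I_n, tau t l = tau t p2 & b < l by exists p2.
have y_end : exists2 l : 'I_n, tau ss l = tau t p2 & l <= c.+1 by exists p1 => //; lia.
have [s [s_range many y_above_c]] :=
  left_k tau_walk tau_inj cb (ltnW (andP ss_range).1) clean_t y_start y_end.
exists s; first lia.
suff : 0 < mismatches lam (tau s) a c by lia.
apply: (mismatches_gt0 (l := p1)) => // tp1.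
by have := y_above_c p1; rewrite tp1 -y_lam e => /(_ erefl); lia.
Qed.

Lemma crossing_from_last_clean_time :
  exists2 s, s0 <= s <= s1 & k.+1 < mismatches lam (tau s) a c + mismatches lam (tau s) c b.
Proof.
have [ss [ss_range many_cb _]] :=
  right_k tau_walk tau_inj cb (ltnW ts1) clean_t x_le_c_at_t x_end.
have t_ss : t < ss.
  rewrite ltn_neqAle (andP ss_range).1 andbT.
  by apply: contraTneq many_cb => <-; rewrite clean_t.
case: (posnP (mismatches lam (tau ss) a c)) => [clean_ss | dirty_ss]; last by exists ss; lia.
case: x_start => l0 x0 _; have [lx xlx] := walk_mem s0 ss l0 tau_walk; rewrite x0 in xlx.
case: (leqP lx a) => [lxa | alx].
  by apply: (crossing_x_low (ss := ss)) => //; [lia | exists lx].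
have clx : c < lx.
  rewrite ltnNge; apply/negP => lxc; apply: (@x_neq_lam lx); first lia.
  by rewrite -xlx (mismatches0P clean_ss) //; lia.
(* x has left the levels <= c between t and ss, so some value y has entered them. *)
pose S := [set l : 'I_n | l <= c].
have x_in_t : x \in tau t @: S.
  by case: x_le_c_at_t => l xl lc; apply/imsetP; exists l; rewrite ?inE.
have x_notin_ss : x \notin tau ss @: S.
  apply/imsetP => -[l]; rewrite inE => lc xl.
  have lxl : lx = l by apply: (@tau_inj ss); rewrite xlx.
  by rewrite lxl in clx; lia.
have codom_sub : {subset codom (tau ss) <= codom (tau t)}.
  by move=> y /codomP [l ->]; have [l' <-] := walk_mem ss t l tau_walk; apply: codom_f.
have [p1 [p2 [p1S p2S e]]] :=
  injective_exchange (@tau_inj t) (@tau_inj ss) codom_sub x_in_t x_notin_ss.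
rewrite !inE -ltnNge in p1S p2S.
have ss_range' : t < ss <= s1 by lia.
case: (leqP p1 a) => [p1a | ap1].
  exact: crossing_entrant_low ss_range' clean_ss p1a p2S e.
by apply: crossing_entrant_mid ss_range' clean_ss _ p2S e; lia.
Qed.

End FromLastCleanTime.

Lemma crossing_step : exists s, [/\ s0 <= s <= s1, k.+1 < mismatches lam (tau s) a b
  & forall l : 'I_n, tau s l = x -> l <= b].
Proof.
have [t [/andP [s0t ts1] clean_t dirty_after_t]] := last_clean_time.
have [s s_range many] := crossing_from_last_clean_time s0t ts1 clean_t dirty_after_t.
exists s; split => // [|l]; last exact: x_le_b.
by rewrite -(mismatches_split lam (tau s) (a := a) (c := c) (b := b)) //; lia.
Qed.

End CrossingStep.

Lemma right_crossingS k : right_crossing k -> right_crossing k.+1.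
Proof.
move=> right_k n T lam tau tau_walk tau_inj a b s0 s1 x ab s01 clean [l0 x0 l0a] [l1 x1 bl1].
rewrite expnS in ab.
have [s1' [s1'_range x_end x_le_b]] :=
  walk_first_arrival (u := b) tau_walk tau_inj s01 x0 ltac:(lia) x1 bl1.
have [s [s_range many x_le]] := crossing_step right_k (left_crossing_of_right right_k)
  tau_walk tau_inj (c := a + 2 ^ k) (b := b) (leqnn _) ltac:(lia) (andP s1'_range).1 clean
  (ex_intro2 _ _ l0 x0 l0a) x_end x_le_b.
by exists s; split => //; lia.
Qed.

Lemma right_crossing_holds k : right_crossing k.
Proof. by elim: k => [|k]; [exact: right_crossing0 | exact: right_crossingS]. Qed.

Lemma adj_step_swap_lv n m (t : {ffun 'I_n.+1 -> 'I_m}) (j : 'I_n.+1) :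
  0 < j -> adj_step t (swap_lv (inord j.-1) j t).
Proof.
move=> j0; right; exists (inord j.-1), j; split => //.
by have jn := ltn_ord j; rewrite inordK; lia.
Qed.

Lemma walk_of_swaps n m N (tau : nat -> {ffun 'I_n.+1 -> 'I_m}) :
  (forall s, 1 <= s <= N ->
     exists j : 'I_n.+1, 0 < j /\ tau s = swap_lv (inord j.-1) j (tau s.-1)) ->
  walk (fun s => tau (minn s N)).
Proof.
move=> swaps s /=; case: (ltnP s N) => sN.
  have -> : minn s.+1 N = s.+1 by lia.
  by have [j [j0 ->]] := swaps s.+1 ltac:(lia); apply: adj_step_swap_lv.
have -> : minn s.+1 N = N by lia.
by left.
Qed.

Lemma INR_expn m k : INR (m ^ k) = (INR m ^ k)%R.
Proof. by elim: k => [|k IHk]; rewrite ?expn0 // expnS mult_INR IHk. Qed.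

Lemma ln_le_trunc_log L : 0 < L -> (ln (INR L) <= INR (trunc_log 2 L).+1)%R.
Proof.
move=> L0; set k := trunc_log 2 L.
have ln2_lt1 : (ln 2 < 1)%R.
  rewrite -[X in (_ < X)%R]ln_exp; apply: ln_increasing; first lra.
  by have := exp_ineq1 1 ltac:(lra); lra.
have L_lt : (INR L < 2 ^ k.+1)%R.
  by rewrite -[2%R]/(INR 2) -INR_expn; apply/lt_INR/ltP/trunc_log_ltn.
have := ln_increasing _ _ (lt_0_INR _ (ltP L0)) L_lt; rewrite ln_pow; last lra.
have := pos_INR k.+1; nra.
Qed.

Theorem lemma9 :
  exists c : R, (0 < c)%R /\
  forall (L m : nat), 2 <= L ->
  forall lam : {ffun 'I_L.+1 -> 'I_m}, injective lam ->
  forall (N : nat) (tau : nat -> {ffun 'I_L.+1 -> 'I_m}),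
    tau 0 = lam ->
    (forall s, 1 <= s <= N ->
       exists j : 'I_L.+1, 0 < j /\ tau s = swap_lv (inord j.-1) j (tau s.-1)) ->
    tau N ord_max = lam ord0 ->
    exists s, s <= N /\
      (c * ln (INR L) <= INR #|[set l | tau s l != lam l]|)%R.
Proof.
exists 1%R; split; first lra.
move=> L m L2 lam lam_inj N tau tau0 swaps tauN.
pose sigma s := tau (minn s N).
have sigma_walk : walk sigma := walk_of_swaps swaps.
have sigma0 : sigma 0 = lam by rewrite /sigma min0n.
have sigma_inj : forall s, injective (sigma s) by apply: walk_inj; rewrite ?sigma0.
have clean0 : mismatches lam (sigma 0) 0 L = 0 by rewrite sigma0 mismatchesxx.
have start : exists2 l : 'I_L.+1, sigma 0 l = lam ord0 & l <= 0 by exists ord0; rewrite ?sigma0.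
have finish : exists2 l : 'I_L.+1, sigma N l = lam ord0 & L <= l.
  by exists ord_max; rewrite /sigma ?minnn.
have k_le : 0 + 2 ^ trunc_log 2 L <= L by rewrite add0n trunc_logP //; lia.
have [s [/andP [_ sN] many _]] :=
  right_crossing_holds sigma_walk sigma_inj k_le (leq0n N) clean0 start finish.
exists s; split => //; rewrite Rmult_1_l.
apply: Rle_trans (ln_le_trunc_log _) _; first lia.
apply/le_INR/leP; apply: leq_trans many _.
by rewrite /sigma (minn_idPl sN); apply: mismatches_le.
Qed.
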